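(* Let $\ell\ge1$ and $D\ge0$, let $d$ be a distortion function on $\mathcal{X}^\ell\times\hat{\mathcal{X}}^\ell$, and let $Q:\mathcal{X}^\ell\to\hat{\mathcal{X}}^\ell$ satisfy $d(x^\ell,Q(x^\ell))\le\ell D$ for all $x^\ell$. Let $(f,g)$ be an IL FS encoder with $s$ states over the input alphabet $\hat{\mathcal{X}}^\ell$ (each $\ell$-block $\hat x^\ell$ being one input symbol), with output function $f:\mathcal{Z}\times\hat{\mathcal{X}}^\ell\to\mathcal{Y}$ and next-state function $g:\mathcal{Z}\times\hat{\mathcal{X}}^\ell\to\mathcal{Z}$. Define the $s\times s$ matrices $$K_{zz'}=\sum_{\{x^\ell\in\mathcal{X}^\ell:\ g(z,Q(x^\ell))=z'\}}2^{-L[f(z,Q(x^\ell))]},\qquad \hat K_{zz'}=\sum_{\{\hat x^\ell\in\hat{\mathcal{X}}^\ell:\ g(z,\hat x^\ell)=z'\}}2^{-L[f(z,\hat x^\ell)]}.$$ Let $\mathcal{B}(\hat x^\ell)=\{x^\ell\in\mathcal{X}^\ell: d(x^\ell,\hat x^\ell)\le\ell D\}$ and $B_\ell=\max_{\hat x^\ell\in\hat{\mathcal{X}}^\ell}|\mathcal{B}(\hat x^\ell)|$. Then $K\le B_\ell\hat K$ entrywise, and $\rho(K)\le B_\ell$.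
   Context: An FS encoder over a finite input alphabet $\mathcal{A}$ consists of a finite set $\mathcal{Z}$ of $s$ states, a finite set $\mathcal{Y}$ of binary strings (possibly including the empty string), an output function $f:\mathcal{Z}\times\mathcal{A}\to\mathcal{Y}$ and a next-state function $g:\mathcal{Z}\times\mathcal{A}\to\mathcal{Z}$; for $z\in\mathcal{Z}$ and $a^n\in\mathcal{A}^n$, with $z_1=z$, $z_{i+1}=g(z_i,a_i)$, $g(z,a^n)=z_{n+1}$ and $f(z,a^n)$ is the concatenated binary string $f(z_1,a_1)\cdots f(z_n,a_n)$ with length $L[f(z,a^n)]=\sum_i L[f(z_i,a_i)]$. It is information lossless (IL) if for every $z$ and $n$ the map $a^n\mapsto(f(z,a^n),g(z,a^n))$ is injective on $\mathcal{A}^n$. $\rho(\cdot)$ denotes spectral radius. *)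

From HB Require Import structures.
From mathcomp Require Import all_boot all_order all_algebra.
From mathcomp Require Import reals.
From mathcomp Require Import complex.
Set Implicit Arguments. Unset Strict Implicit. Unset Printing Implicit Defensive.
Import Order.TTheory GRing.Theory Num.Theory.
Local Open Scope ring_scope.

Fixpoint fs_out (A : Type) (s : nat) (f : 'I_s -> A -> seq bool)
  (g : 'I_s -> A -> 'I_s) (z : 'I_s) (w : seq A) : seq bool :=
  match w with
  | [::] => [::]
  | a :: w' => f z a ++ fs_out f g (g z a) w'
  end.

Fixpoint fs_state (A : Type) (s : nat) (g : 'I_s -> A -> 'I_s)
  (z : 'I_s) (w : seq A) : 'I_s :=
  match w with
  | [::] => z
  | a :: w' => fs_state g (g z a) w'
  end.

Definition IL_encoder (A : finType) (s : nat) (f : 'I_s -> A -> seq bool)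
  (g : 'I_s -> A -> 'I_s) : Prop :=
  forall (z : 'I_s) (n : nat),
    injective (fun w : n.-tuple A => (fs_out f g z w, fs_state g z w)).

Definition spectral_radius_le (R : rcfType) (s : nat) (M : 'M[R]_s) (r : R)
  : Prop :=
  forall lam : R[i], eigenvalue (map_mx (fun x : R => (x%:C)%C) M) lam ->
    `|lam| <= (r%:C)%C.

From HB Require Import structures.
From mathcomp Require Import all_boot all_order all_algebra.
From mathcomp Require Import reals.
From mathcomp Require Import complex.
From mathcomp Require Import lra zify.
Set Implicit Arguments. Unset Strict Implicit. Unset Printing Implicit Defensive.
Import Order.TTheory GRing.Theory Num.Theory.
Local Open Scope ring_scope.

(* If v K = lam v with v <> 0, then |v| is a nonnegative row with
   |lam| |v| <= |v| K, hence |lam|^n |v| <= |v| K^n <= B^n |v| Kh^n, using the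
   entrywise bound K <= B Kh (at most B blocks x are quantized to the same xh,
   all within distortion l D of it).  Entry (z, z') of Kh^n sums 2^-L over the
   n-block inputs driving z to z'; information losslessness injects the inputs
   with output length k into the s 2^k pairs (output, final state), so the row
   sums of Kh^n grow only linearly in n.  A bound |lam|^n <= c (n + 1) B^n for
   all n forces |lam| <= B. *)

Section NonnegMatrix.
Variable R : numDomainType.

Lemma mulmx_ge0 m n p (A : 'M[R]_(m, n)) (B : 'M[R]_(n, p)) :
  (forall i j, 0 <= A i j) -> (forall i j, 0 <= B i j) ->
  forall i j, 0 <= (A *m B) i j.
Proof. by move=> A0 B0 i j; rewrite mxE sumr_ge0 // => k _; rewrite mulr_ge0. Qed.

Lemma ler_mulmx m n p (A A' : 'M[R]_(m, n)) (B B' : 'M[R]_(n, p)) :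
  (forall i j, 0 <= A i j) -> (forall i j, 0 <= B i j) ->
  (forall i j, A i j <= A' i j) -> (forall i j, B i j <= B' i j) ->
  forall i j, (A *m B) i j <= (A' *m B') i j.
Proof. by move=> A0 B0 AA' BB' i j; rewrite !mxE ler_sum // => k _; rewrite ler_pM. Qed.

Lemma exprmx_ge0 s (A : 'M[R]_s) n :
  (forall i j, 0 <= A i j) -> forall i j, 0 <= (A ^+ n) i j.
Proof.
move=> A0; elim: n => [|n IHn] i j; first by rewrite expr0 mxE ler0n.
by rewrite exprS -mulmxE mulmx_ge0.
Qed.

Lemma ler_exprmx s (A A' : 'M[R]_s) n :
  (forall i j, 0 <= A i j) -> (forall i j, A i j <= A' i j) ->
  forall i j, (A ^+ n) i j <= (A' ^+ n) i j.
Proof.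
move=> A0 AA'; elim: n => [|n IHn] i j; first by rewrite !expr0.
by rewrite !exprS -!mulmxE ler_mulmx // => k l; apply: exprmx_ge0.
Qed.

Lemma exprmxZ s (k : R) (A : 'M[R]_s) n : (k *: A) ^+ n = k ^+ n *: A ^+ n.
Proof.
elim: n => [|n IHn]; first by rewrite !expr0 scale1r.
by rewrite !exprS IHn -!mulmxE -scalemxAl -scalemxAr scalerA.
Qed.

Lemma ler_scale_mulmx_exp s (u : 'rV[R]_s) (A : 'M[R]_s) (r : R) :
  0 <= r -> (forall j, 0 <= u 0 j) -> (forall i j, 0 <= A i j) ->
  (forall j, r * u 0 j <= (u *m A) 0 j) ->
  forall n j, r ^+ n * u 0 j <= (u *m A ^+ n) 0 j.
Proof.
move=> r0 u0 A0 uA; elim=> [|n IHn] j; first by rewrite expr0 mul1r mulmx1.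
rewrite exprSr -mulrA; apply: le_trans (ler_wpM2l (exprn_ge0 n r0) (uA j)) _.
have ->: r ^+ n * (u *m A) 0 j = ((r ^+ n *: u) *m A) 0 j.
  by rewrite -scalemxAl [RHS]mxE.
rewrite exprSr -mulmxE mulmxA; apply: ler_mulmx => // i k; rewrite (ord1 i) mxE.
  by rewrite mulr_ge0 ?exprn_ge0.
exact: IHn.
Qed.

End NonnegMatrix.

Lemma bernoulli_ler (R : realDomainType) (e : R) n :
  0 <= e -> 1 + e *+ n <= (1 + e) ^+ n.
Proof.
move=> e0; elim: n => [|n IHn]; first by rewrite mulr0n addr0 expr0.
rewrite exprS; apply: le_trans (ler_wpM2l _ IHn); last by rewrite addr_ge0.
have een : 0 <= e * (e *+ n) by rewrite mulr_ge0 ?mulrn_wge0.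
by rewrite mulrS; nra.
Qed.

Lemma expr_le1_of_linear_bound (R : archiRealFieldType) (t c : R) :
  (forall n, t ^+ n <= c * n.+1%:R) -> t <= 1.
Proof.
move=> tc; rewrite leNgt; apply/negP => t_gt1.
have c_ge1 : 1 <= c by have := tc 0%N; rewrite expr0 mulr1.
set e := t - 1; have e_gt0 : 0 < e by rewrite subr_gt0.
(* t ^+ 2m >= (1 + m e)^2 eventually beats c (2m + 1) *)
set m := (Num.bound (3%:R * c / (e * e))).+1.
have m_ge1 : 1 <= m%:R :> R by rewrite ler1n.
have big_m : 3%:R * c < m%:R * (e * e).
  rewrite -ltr_pdivrMr ?mulr_gt0 //; apply: lt_le_trans (archi_boundP _) _.
    by rewrite divr_ge0 ?mulr_ge0 ?ler0n ?(ltW e_gt0) ?(le_trans ler01 c_ge1).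
  by rewrite /m ler_nat.
have := bernoulli_ler m (ltW e_gt0); rewrite [1 + e]addrC subrK -mulr_natl => tm.
have := tc (m + m)%N; rewrite exprD -natr1 natrD.
have tm2 : (1 + m%:R * e) * (1 + m%:R * e) <= t ^+ m * t ^+ m.
  by apply: ler_pM => //; rewrite addr_ge0 ?mulr_ge0 ?ler0n // ltW.
move: tm2 big_m m_ge1 c_ge1; clearbody e m.
set x := t ^+ m; set y := (m%:R : R); nra.
Qed.

Lemma ler_of_expr_bound (R : archiRealFieldType) (r b c : R) :
  0 <= b -> (forall n, r ^+ n <= c * n.+1%:R * b ^+ n) -> r <= b.
Proof.
move=> b0 rb; have [b_eq0|b_neq0] := eqVneq b 0.
  by have := rb 1%N; rewrite !expr1 b_eq0 mulr0.
have b_gt0 : 0 < b by rewrite lt_def b_neq0.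
rewrite -[leRHS]mul1r -ler_pdivrMr //.
apply: (@expr_le1_of_linear_bound _ _ c) => n.
by rewrite expr_div_n ler_pdivrMr ?exprn_gt0.
Qed.

Lemma normcRe (R : rcfType) (x : R[i]) : `|x| = ((complex.Re `|x|)%:C)%C.
Proof. by rewrite normc_def. Qed.

Lemma spectral_radius_le_of_row_sums (R : realType) s (A : 'M[R]_s) (b c : R) :
  (forall i j, 0 <= A i j) -> 0 <= b ->
  (forall n i, \sum_j (A ^+ n) i j <= c * n.+1%:R * b ^+ n) ->
  spectral_radius_le A b.
Proof.
move=> A0 b0 Ab lam /eigenvalueP [v vA v_neq0].
have Re_norm_ge0 (x : R[i]) : 0 <= complex.Re `|x| by rewrite -ler0c -normcRe.
pose u := \row_j complex.Re `|v 0 j|.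
have u0 j : 0 <= u 0 j by rewrite mxE.
have uA j : complex.Re `|lam| * u 0 j <= (u *m A) 0 j.
  have := congr1 (fun w : 'rV_s => w 0 j) vA; rewrite !mxE => vAj.
  rewrite -lecR rmorphM /= rmorph_sum /= -!normcRe -normrM -vAj.
  apply: le_trans (ler_norm_sum _ _ _) _.
  apply: ler_sum => i _; rewrite normrM rmorphM /= /u !mxE -normcRe.
  by rewrite (ger0_norm (x := ((A i j)%:C)%C)) // ler0c.
have u_pos : 0 < \sum_j u 0 j.
  rewrite lt_def sumr_ge0 // andbT; apply: contra v_neq0 => /eqP/psumr_eq0P u_eq0.
  apply/eqP/rowP => j; rewrite mxE; apply: normr0_eq0.
  by rewrite normcRe; have := u_eq0 (fun i _ => u0 i) j isT; rewrite mxE => ->.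
rewrite normcRe lecR; apply: (ler_of_expr_bound (c := c) b0) => n.
rewrite -(ler_pM2r u_pos) big_distrr /=.
have lam_pow j := ler_scale_mulmx_exp (Re_norm_ge0 lam) u0 A0 uA n j.
apply: le_trans (ler_sum _ (fun j _ => lam_pow j)) _.
have -> : \sum_j (u *m A ^+ n) 0 j = \sum_i u 0 i * \sum_j (A ^+ n) i j.
  under eq_bigr do rewrite mxE.
  by rewrite exchange_big; apply: eq_bigr => i _; rewrite big_distrr.
by rewrite mulrC big_distrl /=; apply: ler_sum => i _; rewrite ler_wpM2l.
Qed.

Lemma sum_tuple_cons (R : nmodType) (A : finType) n (P : pred (n.+1.-tuple A))
    (F : n.+1.-tuple A -> R) :
  \sum_(t | P t) F t =
  \sum_a \sum_(w : n.-tuple A | P (cons_tuple a w)) F (cons_tuple a w).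
Proof.
rewrite (reindex (fun p : A * n.-tuple A => cons_tuple p.1 p.2)) /=.
  by rewrite pair_big_dep; apply: eq_bigl => -[a w].
exists (fun t => (thead t, behead_tuple t)) => [[a w] _ | t _] /=.
  by congr pair; apply: val_inj.
by apply: val_inj => /=; case: t => -[|a w].
Qed.

Section FSEncoder.
Variables (R : numFieldType) (A : finType) (s : nat).
Variables (f : 'I_s -> A -> seq bool) (g : 'I_s -> A -> 'I_s).

Definition fs_kernel : 'M[R]_s :=
  \matrix_(z, z') \sum_(a | g z a == z') 2%:R ^- size (f z a).

Lemma fs_kernel_exp n z z' :
  (fs_kernel ^+ n) z z' =
  \sum_(w : n.-tuple A | fs_state g z w == z') 2%:R ^- size (fs_out f g z w).
Proof.
elim: n z => [|n IHn] z.
  rewrite expr0 mxE; have [<-|z_neq] := eqVneq z z'.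
    by rewrite (big_pred1 [tuple]) ?expr0 ?invr1 // => w; rewrite tuple0 /= !eqxx.
  by rewrite big_pred0 // => w; rewrite tuple0 /=; apply/negbTE.
rewrite exprS -mulmxE mxE sum_tuple_cons (partition_big (g z) xpredT) //=.
apply: eq_bigr => z1 _; rewrite mxE IHn big_distrl /=.
apply: eq_bigr => a /eqP <-; rewrite big_distrr /=.
by apply: eq_bigr => w _; rewrite size_cat exprD invfM.
Qed.

Lemma sum_fs_kernel_exp n z :
  \sum_z' (fs_kernel ^+ n) z z' =
  \sum_(w : n.-tuple A) 2%:R ^- size (fs_out f g z w).
Proof.
under eq_bigr do rewrite fs_kernel_exp.
by symmetry; rewrite (partition_big (fun w : n.-tuple A => fs_state g z w) xpredT).
Qed.

Definition fs_max_out_size := (\max_(p : 'I_s * A) size (f p.1 p.2))%N.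

Lemma size_fs_out_le z (w : seq A) :
  (size (fs_out f g z w) <= size w * fs_max_out_size)%N.
Proof.
elim: w z => [|a w IHw] z //=.
by rewrite size_cat mulSn leq_add // (leq_bigmax_cond (z, a)).
Qed.

Hypothesis IL : IL_encoder f g.

(* An IL encoder sends the words with output length k injectively into the pairs
   (output, final state), of which there are s 2^k. *)
Lemma card_fs_out_size n z k :
  (#|[set w : n.-tuple A | size (fs_out f g z w) == k]| <= s * 2 ^ k)%N.
Proof.
pose code (w : n.-tuple A) :=
  (insubd (nseq_tuple k false) (fs_out f g z w) : k.-tuple bool, fs_state g z w).
have code_inj : {in [set w : n.-tuple A | size (fs_out f g z w) == k] &,
    injective code}.
  move=> w1 w2; rewrite !inE => /eqP size1 /eqP size2 [out12 state12].
  apply: (@IL z n); congr pair => //.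
  by have := congr1 val out12; rewrite !val_insubd size1 size2 eqxx.
rewrite -(card_in_imset code_inj); apply: leq_trans (max_card _) _.
by rewrite card_prod card_tuple card_bool card_ord mulnC.
Qed.

Lemma IL_kraft_sum_le n z :
  \sum_(w : n.-tuple A) 2%:R ^- size (fs_out f g z w) <=
  (s * (n * fs_max_out_size).+1)%:R :> R.
Proof.
set N := (n * fs_max_out_size).+1.
rewrite (partition_big (fun w : n.-tuple A => inord (size (fs_out f g z w)) : 'I_N)
  xpredT) //=.
apply: le_trans (_ : \sum_(k < N) (s%:R : R) <= _); last first.
  by rewrite sumr_const card_ord natrM mulr_natr.
apply: ler_sum => k _.
set S := [set w : n.-tuple A | size (fs_out f g z w) == k].
rewrite (eq_bigl (fun w => w \in S)) => [|w]; last first.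
  rewrite -(inj_eq val_inj) /= inordK ?inE // ltnS.
  by rewrite (leq_trans (size_fs_out_le _ _)) // size_tuple.
rewrite (eq_bigr (fun _ => 2%:R ^- k)) => [|w]; last by rewrite inE => /eqP ->.
rewrite sumr_const -[_ *+ #|S|]mulr_natl ler_pdivrMr ?exprn_gt0 //.
by rewrite -natrX -natrM ler_nat card_fs_out_size.
Qed.

End FSEncoder.

Lemma sum_comp_le_fiber_card (R : numDomainType) (T U : finType) (Q : T -> U)
    (P : pred U) (w : U -> R) (N : nat) :
  (forall u, 0 <= w u) -> (forall u, #|[set x | Q x == u]| <= N)%N ->
  \sum_(x | P (Q x)) w (Q x) <= N%:R * \sum_(u | P u) w u.
Proof.
move=> w0 fiberN; rewrite (partition_big Q P) => [|//] /=.
rewrite big_distrr /=; apply: ler_sum => u Pu.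
rewrite (eq_bigl (fun x => x \in [set x | Q x == u])) => [|x]; last first.
  by rewrite inE andb_idl // => /eqP ->.
rewrite (eq_bigr (fun _ => w u)) => [|x]; last by rewrite inE => /eqP ->.
by rewrite sumr_const -[w u *+ _]mulr_natl ler_wpM2r // ler_nat.
Qed.

Theorem mainTheorem9 (R : realType) (X Xh : finType) (l : nat) (D : R)
  (d : {ffun 'I_l -> X} -> {ffun 'I_l -> Xh} -> R)
  (Q : {ffun 'I_l -> X} -> {ffun 'I_l -> Xh})
  (s : nat) (f : 'I_s -> {ffun 'I_l -> Xh} -> seq bool)
  (g : 'I_s -> {ffun 'I_l -> Xh} -> 'I_s) :
  (1 <= l)%N -> 0 <= D ->
  (forall x xh, 0 <= d x xh) ->
  (forall x, d x (Q x) <= l%:R * D) ->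
  IL_encoder f g ->
  let K : 'M[R]_s := \matrix_(z, z')
      \sum_(x : {ffun 'I_l -> X} | g z (Q x) == z') 2%:R ^- size (f z (Q x)) in
  let Kh : 'M[R]_s := \matrix_(z, z')
      \sum_(xh : {ffun 'I_l -> Xh} | g z xh == z') 2%:R ^- size (f z xh) in
  let B : nat := (\max_(xh : {ffun 'I_l -> Xh})
      #|[set x : {ffun 'I_l -> X} | (d x xh <= l%:R * D)%R]|)%N in
  (forall z z', K z z' <= B%:R * Kh z z') /\ spectral_radius_le K B%:R.
Proof.
move=> _ _ _ dQ IL K Kh B.
have weight_ge0 (k : nat) : 0 <= 2%:R ^- k :> R by rewrite invr_ge0 exprn_ge0.
have K_ge0 z z' : 0 <= K z z' by rewrite mxE sumr_ge0.
have K_le z z' : K z z' <= B%:R * Kh z z'.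
  rewrite !mxE; apply: sum_comp_le_fiber_card => // xh; rewrite /B.
  apply: leq_trans (leq_bigmax xh); apply/subset_leq_card/subsetP => x.
  by rewrite !inE => /eqP <-.
split=> //.
have KhE : Kh = fs_kernel R f g by []; rewrite {}KhE in K_le.
pose c := (s * (fs_max_out_size f).+1)%:R : R.
apply: (spectral_radius_le_of_row_sums (c := c)) => // n z.
apply: le_trans (_ : \sum_z' (B%:R ^+ n *: fs_kernel R f g ^+ n) z z' <= _).
  apply: ler_sum => z' _; rewrite -exprmxZ; apply: ler_exprmx => // i j.
  by rewrite [leRHS]mxE.
under eq_bigr do rewrite mxE.
rewrite -big_distrr /= sum_fs_kernel_exp [leRHS]mulrC ler_wpM2l ?exprn_ge0 //.
apply: le_trans (IL_kraft_sum_le _ IL _ _) _; rewrite -natrM ler_nat; nia.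
Qed.
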